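(* Let $Q$ be a Moufang loop with trivial nucleus. Then there exists a unique automorphism $\sigma$ of the multiplication group $\mathrm{Mlt}(Q)$ such that $\sigma(L_x)=R_x$ and $\sigma(R_x)=M_x^{-1}$ for every $x\in Q$, where $M_x=R_xL_x$. This automorphism satisfies $\sigma^3=\mathrm{id}_{\mathrm{Mlt}(Q)}$, and if $\varphi\in\mathrm{Inn}(Q)$ and $c\in Q$ is a companion of $\varphi$ (i.e. $c\varphi(x)\cdot\varphi(y)=c\varphi(xy)$ for all $x,y\in Q$), then $\sigma(\varphi)=R_c^{-1}\varphi$.
   Context: A loop is a magma with identity $1$ in which the left translations $L_x(y)=xy$ and right translations $R_x(y)=yx$ are bijections; it is Moufang if it satisfies $xy\cdot zx=(x\cdot yz)x$. The multiplication group $\mathrm{Mlt}(Q)$ is the permutation group generated by all $L_x,R_x$; the inner mapping group $\mathrm{Inn}(Q)$ is the stabilizer of $1$ in $\mathrm{Mlt}(Q)$. The nucleus is the set of $x$ with $x(yz)=(xy)z$, $y(xz)=(yx)z$, $y(zx)=(yz)x$ for all $y,z$. In a Moufang loop every inner mapping $\varphi$ is a pseudoautomorphism, i.e. has at least one companion $c$ with $c\varphi(x)\cdot\varphi(y)=c\varphi(xy)$ for all $x,y$. *)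

From mathcomp Require Import ssreflect ssrfun ssrbool.
Set Implicit Arguments. Unset Strict Implicit. Unset Printing Implicit Defensive.

Section LoopDefs.
Variables (T : Type) (mul : T -> T -> T) (one : T).

Definition Lt (x : T) : T -> T := fun y => mul x y.
Definition Rt (x : T) : T -> T := fun y => mul y x.
Definition Mt (x : T) : T -> T := Rt x \o Lt x.

Definition is_loop : Prop :=
  [/\ forall x, mul one x = x, forall x, mul x one = x,
      forall x, bijective (Lt x) & forall x, bijective (Rt x)].

Definition moufang : Prop :=
  forall x y z, mul (mul x y) (mul z x) = mul (mul x (mul y z)) x.

Definition in_nucleus (x : T) : Prop :=
  forall y z, [/\ mul x (mul y z) = mul (mul x y) z,
                  mul y (mul x z) = mul (mul y x) z &
                  mul y (mul z x) = mul (mul y z) x].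

Definition trivial_nucleus : Prop := forall x, in_nucleus x -> x = one.

(* The multiplication group Mlt(Q): the group of permutations of T generated
   by all L_x and R_x (closure under identity, composition and inverses). *)
Inductive Mlt : (T -> T) -> Prop :=
  | Mlt_L x : Mlt (Lt x)
  | Mlt_R x : Mlt (Rt x)
  | Mlt_id : Mlt id
  | Mlt_comp f g : Mlt f -> Mlt g -> Mlt (f \o g)
  | Mlt_inv f g : Mlt f -> cancel f g -> cancel g f -> Mlt g.

Definition Inn (f : T -> T) : Prop := Mlt f /\ f one = one.

Definition companion (phi : T -> T) (c : T) : Prop :=
  forall x y, mul (mul c (phi x)) (phi y) = mul c (phi (mul x y)).

(* sigma is an automorphism of the group Mlt(Q) (only its values on Mlt(Q) matter). *)
Definition Mlt_automorphism (sigma : (T -> T) -> (T -> T)) : Prop :=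
  [/\ forall f, Mlt f -> Mlt (sigma f),
      forall f g, Mlt f -> Mlt g -> sigma (f \o g) = sigma f \o sigma g,
      forall f g, Mlt f -> Mlt g -> sigma f = sigma g -> f = g &
      forall h, Mlt h -> exists2 f, Mlt f & sigma f = h].

Definition inverse_of (g f : T -> T) : Prop := cancel f g /\ cancel g f.

Definition triality_prop (sigma : (T -> T) -> (T -> T)) : Prop :=
  forall x, sigma (Lt x) = Rt x /\ inverse_of (sigma (Rt x)) (Mt x).

End LoopDefs.

(* Moufang's identity says that (L_x, R_x, M_x) is an autotopism, and its right
   counterpart that (R_x, M_x^-1, R_x^-1) is one; autotopisms compose and invert,
   so every f in Mlt(Q) is the first component of an autotopism (f, b, g) with
   b, g in Mlt(Q).  Two such triples differ by an autotopism (1, d, e), and then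
   d = R_c with c in the right nucleus, which in a Moufang loop is the nucleus;
   hence b is unique when the nucleus is trivial, and sigma(f) := b is an
   endomorphism of Mlt(Q) sending L_x to R_x and R_x to M_x^-1 = M_(x^-1).
   Then sigma^3 fixes the generators L_x and R_x, so sigma^3 = 1 and sigma is an
   automorphism; any other such tau agrees with sigma on the generators.  For a
   companion c of phi, (L_c phi, phi, L_c phi) is an autotopism, so
   R_c sigma(phi) = sigma(L_c phi) = phi. *)

From mathcomp Require Import ssreflect ssrfun ssrbool.
From Stdlib Require Import FunctionalExtensionality ClassicalEpsilon.

Set Implicit Arguments. Unset Strict Implicit. Unset Printing Implicit Defensive.

Section Loop.
Variables (T : Type) (mul : T -> T -> T) (one : T).
Hypothesis hloop : is_loop mul one.

Local Notation "x ** y" := (mul x y) (at level 40, left associativity).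

Lemma mul1x x : one ** x = x. Proof. by case: hloop. Qed.
Lemma mulx1 x : x ** one = x. Proof. by case: hloop. Qed.

Lemma mulxI x : injective (mul x).
Proof. by case: hloop => _ _ /(_ x) /bij_inj. Qed.

Lemma mulIx x : injective (mul^~ x).
Proof. by case: hloop => _ _ _ /(_ x) /bij_inj. Qed.

Lemma Mlt_bij f : Mlt mul f -> bijective f.
Proof.
case: hloop => _ _ bijL bijR.
elim=> [x|x| |f1 g1 _ bf1 _ bg1|f1 g1 _ _ fK Kf]; first exact: bijL.
- exact: bijR.
- by exists id.
- exact: bij_comp.
- by exists f1.
Qed.

Lemma exists_rinv x : exists y, x ** y = one.
Proof. by case: hloop => _ _ /(_ x) [g _ Kg] _; exists (g one); exact: Kg. Qed.

Definition autotopism (a b g : T -> T) := forall y z, a y ** b z = g (y ** z).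

Lemma autotopism_id : autotopism id id id. Proof. by []. Qed.

Lemma autotopism_comp a1 b1 g1 a2 b2 g2 :
  autotopism a1 b1 g1 -> autotopism a2 b2 g2 ->
  autotopism (a1 \o a2) (b1 \o b2) (g1 \o g2).
Proof. by move=> h1 h2 y z /=; rewrite h1 h2. Qed.

Lemma autotopism_inv a b g a' b' g' :
  cancel a' a -> cancel b' b -> cancel g g' ->
  autotopism a b g -> autotopism a' b' g'.
Proof. by move=> Ka Kb gK h y z; rewrite -[in RHS](Ka y) -[in RHS](Kb z) h gK. Qed.

Lemma autotopism_idl d e : autotopism id d e ->
  (forall y, d y = y ** d one) /\ (forall y z, y ** (z ** d one) = (y ** z) ** d one).
Proof.
move=> h; have {}h y z : y ** d z = e (y ** z) := h y z.
have ed z : e z = d z by rewrite -[in LHS](mul1x z) -h mul1x.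
have dR y : d y = y ** d one by rewrite h mulx1 ed.
by split=> // y z; rewrite -!dR h ed.
Qed.

End Loop.

Section MltMorphism.
Variables (T : Type) (mul : T -> T -> T) (one : T).
Hypothesis hloop : is_loop mul one.

Definition Mlt_morphism (s : (T -> T) -> T -> T) :=
  (forall f, Mlt mul f -> Mlt mul (s f)) /\
  (forall f g, Mlt mul f -> Mlt mul g -> s (f \o g) = s f \o s g).

Lemma Mlt_morphism_comp s t :
  Mlt_morphism s -> Mlt_morphism t -> Mlt_morphism (s \o t).
Proof.
move=> [sM sC] [tM tC]; split=> [f mf|f g mf mg] /=; first exact/sM/tM.
by rewrite tC // sC //; exact: tM.
Qed.

Lemma inverse_of_uniq (f g g' : T -> T) :
  inverse_of g f -> inverse_of g' f -> g = g'.
Proof.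
move=> [fK _] [_ Kf']; apply: functional_extensionality => y.
by rewrite -{1}(Kf' y) fK.
Qed.

Lemma Mlt_morphism_id s : Mlt_morphism s -> s id = id.
Proof.
move=> [sM sC]; have sid_inj := bij_inj (Mlt_bij hloop (sM _ (Mlt_id mul))).
apply: functional_extensionality => y; apply: sid_inj.
exact: esym (congr1 (fun h => h y) (sC _ _ (Mlt_id mul) (Mlt_id mul))).
Qed.

Lemma Mlt_morphism_inv s f g : Mlt_morphism s -> Mlt mul f ->
  cancel f g -> cancel g f -> inverse_of (s g) (s f).
Proof.
move=> ms mf fK Kf; have mg := Mlt_inv mf fK Kf.
have gf : g \o f = id by apply: functional_extensionality.
have fg : f \o g = id by apply: functional_extensionality.
have [_ sC] := ms; have sid := Mlt_morphism_id ms.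
have sgf : s g \o s f = id by rewrite -sC // gf.
have sfg : s f \o s g = id by rewrite -sC // fg.
by split=> y; [exact: (congr1 (fun h => h y) sgf)|exact: (congr1 (fun h => h y) sfg)].
Qed.

Lemma Mlt_morphism_eq s t f : Mlt_morphism s -> Mlt_morphism t ->
  (forall x, s (Lt mul x) = t (Lt mul x)) ->
  (forall x, s (Rt mul x) = t (Rt mul x)) ->
  Mlt mul f -> s f = t f.
Proof.
move=> ms mt eL eR; have [_ sC] := ms; have [_ tC] := mt.
elim=> [x|x| |f1 f2 mf1 ef1 mf2 ef2|f1 g mf ef fK Kf].
- exact: eL.
- exact: eR.
- by rewrite !Mlt_morphism_id.
- by rewrite sC // tC // ef1 ef2.
- apply: inverse_of_uniq (Mlt_morphism_inv ms mf fK Kf) _.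
  by rewrite ef; exact: Mlt_morphism_inv.
Qed.

End MltMorphism.

Section Moufang.
Variables (T : Type) (mul : T -> T -> T) (one : T).
Hypotheses (hloop : is_loop mul one) (hmou : moufang mul).

Local Notation "x ** y" := (mul x y) (at level 40, left associativity).
Local Notation mul1x := (mul1x hloop).
Local Notation mulx1 := (mulx1 hloop).
Local Notation mulxI := (mulxI hloop).
Local Notation mulIx := (mulIx hloop).

Lemma flexible x y : x ** (y ** x) = (x ** y) ** x.
Proof. by have := hmou x one y; rewrite mulx1 mul1x. Qed.

Definition inv x := proj1_sig (constructive_indefinite_description _
  (exists_rinv hloop x)).

Lemma mulxV x : x ** inv x = one.
Proof. exact: proj2_sig (constructive_indefinite_description _ (exists_rinv hloop x)). Qed.

Lemma mulKVx x : cancel (mul (inv x)) (mul x).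
Proof.
move=> z; apply: (@mulIx x).
by rewrite -hmou mulxV mul1x.
Qed.

Lemma mulVx x : inv x ** x = one.
Proof. by apply: (@mulxI x); rewrite mulKVx mulx1. Qed.

Lemma mulKx x : cancel (mul x) (mul (inv x)).
Proof. by move=> z; apply: (@mulxI x); rewrite mulKVx. Qed.

Lemma mulxKV x : cancel (mul^~ (inv x)) (mul^~ x).
Proof.
move=> y; apply: (@mulxI x).
by rewrite flexible -hmou mulVx mulx1.
Qed.

Lemma mulxK x : cancel (mul^~ x) (mul^~ (inv x)).
Proof. by move=> y; apply: (@mulIx x); rewrite mulxKV. Qed.

Lemma invK x : inv (inv x) = x.
Proof. by apply: (@mulxI (inv x)); rewrite mulxV mulVx. Qed.

Lemma invM x y : inv (x ** y) = inv y ** inv x.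
Proof.
have e : inv (x ** y) ** x = inv y by rewrite -{2}(mulxK y x) mulKx.
by rewrite -e mulxK.
Qed.

Lemma moufangR y x w : ((y ** x) ** w) ** x = y ** ((x ** w) ** x).
Proof.
have key v : (v ** w) ** x = (v ** inv x) ** ((x ** w) ** x).
  have := hmou x (inv v) (v ** w); rewrite mulKx => <-.
  by rewrite -[v ** inv x]invK invM invK mulKx.
by rewrite key mulxK.
Qed.

Lemma right_nuclear_in_nucleus c :
  (forall y z, y ** (z ** c) = (y ** z) ** c) -> in_nucleus mul c.
Proof.
move=> hr.
have hl u b : (c ** u) ** b = c ** (u ** b).
  apply: (@mulxI (inv c)); rewrite mulKx.
  have := congr1 inv (hr (inv b) (inv (c ** u))).
  by rewrite !invM !invK mulKx.
move=> y z; split; first by rewrite hl.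
- by have := moufangR y c (z ** inv c); rewrite -hr !mulxKV hl mulxKV.
- exact: hr.
Qed.

Lemma Mlt_Mt x : Mlt mul (Mt mul x).
Proof. exact: Mlt_comp (Mlt_R _ _) (Mlt_L _ _). Qed.

Lemma MtK x : cancel (Mt mul x) (Mt mul (inv x)).
Proof.
by move=> y; rewrite /Mt /Rt /Lt /= -[(x ** y) ** x]flexible mulKx mulxK.
Qed.

Lemma MtKV x : cancel (Mt mul (inv x)) (Mt mul x).
Proof. by move=> y; rewrite -{1}(invK x) MtK. Qed.

Lemma Mt_Rt_inv x y : Mt mul x (Rt mul (inv x) y) = x ** y.
Proof. by rewrite /Mt /Rt /Lt /= -flexible mulxKV. Qed.

Lemma autotopism_LRM x : autotopism mul (Lt mul x) (Rt mul x) (Mt mul x).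
Proof. exact: hmou. Qed.

Lemma autotopism_RMR x :
  autotopism mul (Rt mul x) (Mt mul (inv x)) (Rt mul (inv x)).
Proof.
move=> y z; apply: (@mulIx x); rewrite /Rt mulxKV moufangR.
by rewrite -[(x ** _) ** x]/(Mt mul x _) MtKV.
Qed.

End Moufang.

Section Triality.
Variables (T : Type) (mul : T -> T -> T) (one : T).
Hypotheses (hloop : is_loop mul one) (hmou : moufang mul)
  (hnuc : trivial_nucleus mul one).

Local Notation inv := (inv hloop).

Lemma autotopism_idl_trivial d e : autotopism mul id d e -> d = id.
Proof.
move=> /(autotopism_idl hloop) [dR /(right_nuclear_in_nucleus hloop hmou)/hnuc d1].
by apply: functional_extensionality => y; rewrite dR d1 (mulx1 hloop).
Qed.

Lemma autotopism_snd_uniq a b g b' g' : bijective b -> bijective g ->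
  autotopism mul a b g -> autotopism mul a b' g' -> b' = b.
Proof.
move=> [bi bK Kb] [gi gK Kg] h h'.
have hd : autotopism mul id (bi \o b') (gi \o g').
  by move=> y z; apply: (can_inj gK); rewrite /= Kg -h Kb h'.
have dK := autotopism_idl_trivial hd.
apply: functional_extensionality => z.
by rewrite -[b' z]Kb -[bi (b' z)]/((bi \o b') z) dK.
Qed.

Definition Mlt_autotopic f b :=
  exists g, [/\ Mlt mul b, Mlt mul g & autotopism mul f b g].

Lemma Mlt_autotopic_comp f1 f2 b1 b2 :
  Mlt_autotopic f1 b1 -> Mlt_autotopic f2 b2 -> Mlt_autotopic (f1 \o f2) (b1 \o b2).
Proof.
move=> [g1 [mb1 mg1 h1]] [g2 [mb2 mg2 h2]].
by exists (g1 \o g2); split; [exact: Mlt_comp|exact: Mlt_comp|exact: autotopism_comp].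
Qed.

Lemma Mlt_autotopicL x : Mlt_autotopic (Lt mul x) (Rt mul x).
Proof. by exists (Mt mul x); split; [exact: Mlt_R|exact: Mlt_Mt|exact: autotopism_LRM]. Qed.

Lemma Mlt_autotopicR x : Mlt_autotopic (Rt mul x) (Mt mul (inv x)).
Proof.
exists (Rt mul (inv x)); split; [exact: Mlt_Mt|exact: Mlt_R|].
exact: autotopism_RMR.
Qed.

Lemma Mlt_autotopic_ex f : Mlt mul f -> exists b, Mlt_autotopic f b.
Proof.
elim=> [x|x| |f1 g1 _ [b1 h1] _ [b2 h2]|f1 g1 _ [b [c [mb mc h]]] fK Kf].
- by exists (Rt mul x); exact: Mlt_autotopicL.
- by exists (Mt mul (inv x)); exact: Mlt_autotopicR.
- by exists id, id; split; [exact: Mlt_id|exact: Mlt_id|exact: autotopism_id].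
- by exists (b1 \o b2); exact: Mlt_autotopic_comp.
- case: (Mlt_bij hloop mb) => bi bK Kb; case: (Mlt_bij hloop mc) => ci cK Kc.
  exists bi, ci; split; [exact: Mlt_inv mb bK Kb|exact: Mlt_inv mc cK Kc|].
  exact: autotopism_inv h.
Qed.

Definition sigma f := epsilon (inhabits id) (Mlt_autotopic f).

Lemma sigmaP f : Mlt mul f -> Mlt_autotopic f (sigma f).
Proof. by move=> /Mlt_autotopic_ex; exact: epsilon_spec. Qed.

Lemma sigma_eq f b : Mlt mul f -> Mlt_autotopic f b -> sigma f = b.
Proof.
move=> /sigmaP [g [_ _ h]] [g' [mb mg h']].
exact: autotopism_snd_uniq (Mlt_bij hloop mb) (Mlt_bij hloop mg) h' h.
Qed.

Lemma sigmaM f g : Mlt mul f -> Mlt mul g -> sigma (f \o g) = sigma f \o sigma g.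
Proof.
move=> mf mg; apply: sigma_eq; first exact: Mlt_comp.
exact: Mlt_autotopic_comp (sigmaP mf) (sigmaP mg).
Qed.

Lemma sigma_morphism : Mlt_morphism mul sigma.
Proof. by split=> [f /sigmaP [g []] //|]; exact: sigmaM. Qed.

Lemma sigmaL x : sigma (Lt mul x) = Rt mul x.
Proof. exact: sigma_eq (Mlt_L _ x) (Mlt_autotopicL x). Qed.

Lemma sigmaR x : sigma (Rt mul x) = Mt mul (inv x).
Proof. exact: sigma_eq (Mlt_R _ x) (Mlt_autotopicR x). Qed.

Lemma sigma_Mt_inv x : sigma (Mt mul (inv x)) = Lt mul x.
Proof.
rewrite /Mt sigmaM ?sigmaR ?sigmaL ?(invK hloop hmou); [|exact: Mlt_R|exact: Mlt_L].
by apply: functional_extensionality => y; exact: Mt_Rt_inv.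
Qed.

Lemma sigma3 f : Mlt mul f -> sigma (sigma (sigma f)) = f.
Proof.
have ms := sigma_morphism.
have ms3 := Mlt_morphism_comp (Mlt_morphism_comp ms ms) ms.
have mid : Mlt_morphism mul id by [].
move=> mf; apply: (Mlt_morphism_eq hloop ms3 mid _ _ mf) => x /=.
- by rewrite sigmaL sigmaR sigma_Mt_inv.
- by rewrite sigmaR sigma_Mt_inv sigmaL.
Qed.

Lemma sigma_automorphism : Mlt_automorphism mul sigma.
Proof.
have [sM sC] := sigma_morphism.
split=> // [f g mf mg e|h mh]; first by rewrite -(sigma3 mf) -(sigma3 mg) e.
by exists (sigma (sigma h)); [exact/sM/sM|exact: sigma3].
Qed.

Lemma sigma_triality : triality_prop mul sigma.
Proof. by move=> x; rewrite sigmaL sigmaR; split=> //; split; [exact: MtK|exact: MtKV]. Qed.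

Lemma sigma_unique tau : Mlt_automorphism mul tau -> triality_prop mul tau ->
  forall f, Mlt mul f -> tau f = sigma f.
Proof.
move=> [tM tC _ _] htau f mf.
apply: (Mlt_morphism_eq hloop (conj tM tC) sigma_morphism _ _ mf) => x.
- by rewrite sigmaL; case: (htau x).
- exact: inverse_of_uniq (htau x).2 (sigma_triality x).2.
Qed.

Lemma sigma_companion phi c rcinv : Mlt mul phi -> companion mul phi c ->
  inverse_of rcinv (Rt mul c) -> sigma phi = rcinv \o phi.
Proof.
move=> mphi hc [rK _].
have mcphi : Mlt mul (Lt mul c \o phi) by apply: Mlt_comp (Mlt_L _ c) mphi.
have : sigma (Lt mul c \o phi) = phi by apply: sigma_eq => //; exists (Lt mul c \o phi).
rewrite sigmaM // ?sigmaL; last exact: Mlt_L.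
by move=> e; apply: functional_extensionality => y; rewrite -[in RHS]e /= rK.
Qed.

End Triality.

Theorem lemma6p3 (T : Type) (mul : T -> T -> T) (one : T)
  (hloop : is_loop mul one) (hmou : moufang mul)
  (hnuc : trivial_nucleus mul one) :
  exists sigma : (T -> T) -> (T -> T),
    [/\ Mlt_automorphism mul sigma /\ triality_prop mul sigma,
        (forall tau, Mlt_automorphism mul tau -> triality_prop mul tau ->
           forall f, Mlt mul f -> tau f = sigma f),
        (forall f, Mlt mul f -> sigma (sigma (sigma f)) = f) &
        (forall phi c rcinv, Inn mul one phi -> companion mul phi c ->
           inverse_of rcinv (Rt mul c) -> sigma phi = rcinv \o phi)].
Proof.
exists (sigma mul); split.
- split; [exact: sigma_automorphism hloop hmou hnuc|exact: sigma_triality hloop hmou hnuc].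
- exact: sigma_unique hloop hmou hnuc.
- exact: sigma3 hloop hmou hnuc.
- by move=> phi c rcinv [mphi _]; exact: (sigma_companion hloop hmou hnuc mphi).
Qed.
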